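(* For every integer $d\ge 50$, $\displaystyle\sum_{H\in\mathcal{R}(d-1)}\left(\frac{1}{d-|H|}-\frac1d\right)<\frac{1}{18}$.
   Context: For finite sets $A,B\subseteq\mathbb{N}^+$, $A$ precedes $B$ in the colexicographic order if $\max(A\triangle B)\in B$. For $m\in\mathbb{N}$, $\mathcal{R}(m)$ denotes the family of the first $m$ finite subsets of $\mathbb{N}^+$ in the colexicographic order (starting with $\emptyset$). *)

From HB Require Import structures.
From mathcomp Require Import all_boot all_order all_algebra.
From mathcomp Require Import finmap.
Set Implicit Arguments. Unset Strict Implicit. Unset Printing Implicit Defensive.
Import Order.TTheory GRing.Theory Num.Theory.
Local Open Scope fset_scope.

(* Finite subsets of N^+ are finite sets of naturals not containing 0. *)
Definition posfin (A : {fset nat}) : bool := 0 \notin A.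

(* Colexicographic order: A precedes B iff max (A symdiff B) lies in B,
   i.e. there is m in B \ A such that A and B agree above m. *)
Definition colex_prec (A B : {fset nat}) : Prop :=
  exists2 m, (m \in B) && (m \notin A) &
    forall k, m < k -> (k \in A) = (k \in B).

(* is_R m F : the family F (listed without repetition) is R(m), the family of
   the first m finite subsets of N^+ in colex order: F consists of exactly m
   distinct finite subsets of N^+ and is an initial segment of the colex order. *)
Definition is_R (m : nat) (F : seq {fset nat}) : Prop :=
  [/\ uniq F, size F = m, all posfin F &
      forall A B, posfin A -> B \in F -> colex_prec A B -> A \in F].

From HB Require Import structures.
From mathcomp Require Import all_boot all_order all_algebra.
From mathcomp Require Import finmap.
From mathcomp Require Import zify ring lra.
Import Order.TTheory GRing.Theory Num.Theory.

Set Implicit Arguments.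
Unset Strict Implicit.
Unset Printing Implicit Defensive.

(* Reading a finite set A of positive integers as the binary number
   \sum_(i in A) 2 ^ i.-1 turns the colex order into the order of nat, so R(d-1)
   consists of the sets coding 0, ..., d-2, and |H| is the number of ones in the
   binary expansion (popcount) of the code of H.  A term equals s / (d (d - s)),
   hence is at most s / (d (d - k)) when every popcount is at most
   k = up_log 2 (d-1); so the sum is at most T / (d (d - k)), with T the total
   popcount of 0, ..., d-2.  Splitting off the top bit of the numbers below 2^k
   gives T <= k (d-1) / 2, which is enough once d >= 10 k, i.e. for d >= 130.
   For 54 <= d <= 129 the exact value of T is enough, and for 50 <= d <= 53 the
   sum is evaluated exactly. *)

Definition bit (i n : nat) : bool := odd (n %/ 2 ^ i).

Lemma bit_small i n : n < 2 ^ i -> bit i n = false.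
Proof. by move=> lt_n; rewrite /bit divn_small. Qed.

Lemma modn_exp2S n b : n %% 2 ^ b.+1 = n %% 2 ^ b + bit b n * 2 ^ b.
Proof.
rewrite /bit {1}(divn_eq n (2 ^ b)) -{1}(odd_double_half (n %/ 2 ^ b)).
have := ltn_pmod n (expn_gt0 2 b).
set q := n %/ 2 ^ b; set r := n %% 2 ^ b => r_lt.
have -> : (odd q + q./2.*2) * 2 ^ b + r = q./2 * 2 ^ b.+1 + (odd q * 2 ^ b + r).
  by rewrite expnS -muln2; ring.
rewrite modnMDl modn_small ?[r + _]addnC //.
by rewrite expnS; case: (odd q); lia.
Qed.

Lemma bit_exp2Dl j r i : i < j -> bit i (2 ^ j + r) = bit i r.
Proof.
move=> lt_ij; rewrite /bit -(subnK (ltnW lt_ij)) expnD divnMDl ?expn_gt0 //.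
by rewrite oddD oddX subn_eq0 leqNgt lt_ij.
Qed.

Lemma bit_exp2D j r : r < 2 ^ j -> bit j (2 ^ j + r) = true.
Proof.
by move=> lt_r; rewrite /bit -{1}(mul1n (2 ^ j)) divnMDl ?expn_gt0 // divn_small.
Qed.

Definition code (b : nat) (A : {fset nat}) : nat :=
  \sum_(i < b) (i.+1 \in A) * 2 ^ i.

Lemma codeS b A : code b.+1 A = code b A + (b.+1 \in A) * 2 ^ b.
Proof. by rewrite /code big_ord_recr. Qed.

Lemma code_lt b A : code b A < 2 ^ b.
Proof.
elim: b => [|b IH]; first by rewrite /code big_ord0.
by rewrite codeS expnS; case: (_ \in _); lia.
Qed.

Lemma code_widen b b' A :
  (forall i, i \in A -> i <= b) -> b <= b' -> code b' A = code b A.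
Proof.
move=> leA; elim: b' => [|b' IH]; first by rewrite leqn0 => /eqP ->.
rewrite leq_eqVlt => /orP[/eqP <- // | lt_bb'].
rewrite codeS IH; last lia.
by case inA: (_ \in _); [have := leA _ inA; lia | rewrite addn0].
Qed.

Lemma code_inj_mem b A B :
  code b A = code b B -> forall k, 0 < k <= b -> (k \in A) = (k \in B).
Proof.
elim: b => [|b IH] eqAB k; first lia.
move: eqAB; rewrite !codeS => eqAB.
have ltA := code_lt b A; have ltB := code_lt b B.
have top : (b.+1 \in A) = (b.+1 \in B).
  by case: (b.+1 \in A) eqAB; case: (b.+1 \in B) => //; lia.
rewrite top in eqAB => /andP[k_gt0].
rewrite leq_eqVlt => /orP[/eqP -> // | lt_kb].
by apply: IH; [lia | rewrite k_gt0].
Qed.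

Lemma code_lt_max_diff b A B : code b A < code b B ->
  exists m, [/\ 0 < m <= b, m \in B, m \notin A &
                forall k, m < k <= b -> (k \in A) = (k \in B)].
Proof.
elim: b => [|b IH]; first by rewrite /code !big_ord0.
rewrite !codeS => ltAB.
have ltA := code_lt b A; have ltB := code_lt b B.
have [eq_top|ne_top] := eqVneq (b.+1 \in A) (b.+1 \in B).
  rewrite eq_top in ltAB; have [m [m_b mB mA agree]] := IH ltac:(lia).
  exists m; split => // [|k /andP[lt_mk]]; first lia.
  by rewrite leq_eqVlt => /orP[/eqP -> // | ?]; apply: agree; lia.
have [bA bB] : b.+1 \notin A /\ b.+1 \in B.
  by move: ltAB ne_top; case: (_ \in A); case: (_ \in B) => //=; lia.
by exists b.+1; split; rewrite ?leqnn // => k /andP[lt_bk le_kb]; exfalso; lia.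
Qed.

Definition popcount_upto (k n : nat) : nat := count (bit^~ n) (iota 0 k).
Definition popcount (n : nat) : nat := popcount_upto n n.

Definition decode (n : nat) : {fset nat} :=
  seq_fset tt [seq i.+1 | i <- iota 0 n & bit i n].

Lemma mem_decode i n : (i.+1 \in decode n) = bit i n.
Proof.
rewrite /decode seq_fsetE (mem_map succn_inj) mem_filter mem_iota /=.
case b_in: (bit i n) => //=; case: (ltnP i n) => // le_ni.
by rewrite bit_small ?(leq_ltn_trans le_ni (ltn_expl _ _)) in b_in.
Qed.

Lemma posfin_decode n : posfin (decode n).
Proof. by rewrite /posfin /decode seq_fsetE; apply/mapP => -[]. Qed.

Lemma decode_le k n : k \in decode n -> k <= n.
Proof.
rewrite /decode seq_fsetE => /mapP[i]; rewrite mem_filter mem_iota.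
by case/and3P => _ _ lt_in ->.
Qed.

Lemma code_decode b n : code b (decode n) = n %% 2 ^ b.
Proof.
elim: b => [|b IH]; first by rewrite /code big_ord0 modn1.
by rewrite codeS mem_decode IH modn_exp2S.
Qed.

Lemma card_decode n : #|` decode n| = popcount n.
Proof.
rewrite /decode size_seq_fset undup_id ?size_map ?size_filter //.
by rewrite (map_inj_uniq succn_inj) filter_uniq // iota_uniq.
Qed.

Definition max_elt (A : {fset nat}) : nat := \max_(i <- A) i.
Definition encode (A : {fset nat}) : nat := code (max_elt A) A.

Lemma max_elt_ge A i : i \in A -> i <= max_elt A.
Proof. by move=> iA; rewrite /max_elt (leq_bigmax_seq (F := id) i iA). Qed.

Lemma encodeE A b : max_elt A <= b -> encode A = code b A.
Proof.
by move=> le_Ab; rewrite /encode (code_widen _ le_Ab) //; apply: max_elt_ge.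
Qed.

Lemma encode_inj A B : posfin A -> posfin B -> encode A = encode B -> A = B.
Proof.
move=> A0 B0; set b := maxn (max_elt A) (max_elt B).
rewrite (encodeE (leq_maxl _ _ : _ <= b)) (encodeE (leq_maxr _ _ : _ <= b)) => eqAB.
apply/fsetP => -[|k]; first by rewrite (negbTE A0) (negbTE B0).
have [le_kb|lt_bk] := leqP k.+1 b; first by rewrite (code_inj_mem eqAB).
case kA: (k.+1 \in A); first by have := max_elt_ge kA; lia.
by case kB: (k.+1 \in B) => //; have := max_elt_ge kB; lia.
Qed.

Lemma encode_decode n : encode (decode n) = n.
Proof.
rewrite (@encodeE _ n); last by apply/bigmax_leqP_seq => i /decode_le.
by rewrite code_decode modn_small // ltn_expl.
Qed.

Lemma decode_encode A : posfin A -> decode (encode A) = A.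
Proof.
by move=> A0; apply: encode_inj; rewrite ?encode_decode ?posfin_decode.
Qed.

Lemma encode_lt_colex A B :
  posfin A -> posfin B -> encode A < encode B -> colex_prec A B.
Proof.
move=> A0 B0; set b := maxn (max_elt A) (max_elt B).
rewrite (encodeE (leq_maxl _ _ : _ <= b)) (encodeE (leq_maxr _ _ : _ <= b)).
case/code_lt_max_diff => m [_ mB mA agree]; exists m; first by rewrite mB.
move=> k lt_mk; have [le_kb|lt_bk] := leqP k b; first by rewrite agree ?lt_mk.
case kA: (k \in A); first by have := max_elt_ge kA; lia.
by case kB: (k \in B) => //; have := max_elt_ge kB; lia.
Qed.

Lemma perm_iota_downclosed (s : seq nat) : uniq s ->
  (forall x y, x \in s -> y < x -> y \in s) -> perm_eq s (iota 0 (size s)).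
Proof.
move=> s_uniq s_down.
have lt_size x : x \in s -> x < size s.
  move=> xs; have := uniq_leq_size (iota_uniq 0 x.+1) (s2 := s).
  rewrite size_iota; apply=> y; rewrite mem_iota => /andP[_ lt_yx].
  by have [-> // | ne_yx] := eqVneq y x; apply: s_down xs _; lia.
have sub : {subset s <= iota 0 (size s)} by move=> x /lt_size; rewrite mem_iota.
have [_ eq_s] := uniq_min_size s_uniq sub (eq_leq (size_iota _ _)).
by apply: uniq_perm; rewrite ?iota_uniq.
Qed.

Lemma perm_encode_is_R m F : is_R m F -> perm_eq (map encode F) (iota 0 m).
Proof.
case=> F_uniq <- /allP F0 F_down; rewrite -(size_map encode).
apply: perm_iota_downclosed => [|_ n /mapP[B BF ->] lt_nB].
  by rewrite (map_inj_in_uniq (fun A B AF BF => encode_inj (F0 A AF) (F0 B BF))).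
have decF : decode n \in F.
  apply: (F_down _ B (posfin_decode n) BF).
  by apply: encode_lt_colex; [exact: posfin_decode | exact: F0 | rewrite encode_decode].
by apply/mapP; exists (decode n); rewrite ?encode_decode.
Qed.

Lemma big_is_R_card (R : Type) (idx : R) (op : Monoid.com_law idx) m F (G : nat -> R) :
  is_R m F -> \big[op/idx]_(H <- F) G #|` H| = \big[op/idx]_(n <- iota 0 m) G (popcount n).
Proof.
move=> RF; have F0 : forall A, A \in F -> posfin A by case: RF => _ _ /allP.
rewrite -(perm_big _ (perm_encode_is_R RF)) big_map; apply: eq_big_seq => H HF.
by rewrite -{1}(decode_encode (F0 H HF)) card_decode.
Qed.

Lemma popcount_uptoS k n : popcount_upto k.+1 n = popcount_upto k n + bit k n.
Proof. by rewrite /popcount_upto -addn1 iotaD count_cat /= addn0. Qed.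

Lemma popcount_upto_le k n : popcount_upto k n <= k.
Proof. by rewrite -[leqRHS](size_iota 0) count_size. Qed.

Lemma popcount_upto_widen k k' n :
  n < 2 ^ k -> k <= k' -> popcount_upto k' n = popcount_upto k n.
Proof.
move=> lt_n le_kk'; rewrite /popcount_upto -(subnKC le_kk') iotaD count_cat.
rewrite (@eq_in_count _ _ pred0 (iota _ (k' - k))) ?count_pred0 ?addn0 // => i.
rewrite mem_iota => /andP[le_ki _]; apply: bit_small.
by apply: leq_trans lt_n _; rewrite leq_exp2l.
Qed.

Lemma popcountE k n : n < 2 ^ k -> popcount n = popcount_upto k n.
Proof.
move=> lt_n; have [le_kn|lt_nk] := leqP k n; first exact: popcount_upto_widen.
by symmetry; apply: popcount_upto_widen; [exact: ltn_expl | exact: ltnW].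
Qed.

Lemma popcount_le k n : n < 2 ^ k -> popcount n <= k.
Proof. by move=> lt_n; rewrite (popcountE lt_n) popcount_upto_le. Qed.

Lemma popcount_exp2D j r : r < 2 ^ j -> popcount (2 ^ j + r) = (popcount r).+1.
Proof.
move=> lt_r; rewrite (@popcountE j.+1); last by rewrite expnS; lia.
rewrite (popcountE lt_r) popcount_uptoS bit_exp2D // addn1; congr _.+1.
by apply: eq_in_count => i; rewrite mem_iota => /andP[_ /bit_exp2Dl].
Qed.

Definition total_popcount (m : nat) : nat := \sum_(n <- iota 0 m) popcount n.

Lemma total_popcount_exp2D j r : r <= 2 ^ j ->
  total_popcount (2 ^ j + r) = total_popcount (2 ^ j) + total_popcount r + r.
Proof.
move=> le_r; rewrite /total_popcount iotaD big_cat -addnA; congr (_ + _).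
rewrite add0n -[X in iota X _]addn0 iotaDl big_map.
rewrite (eq_big_seq (fun n => popcount n + 1)); last first.
  by move=> n; rewrite mem_iota => /andP[_ lt_n]; rewrite addn1 popcount_exp2D //; lia.
by rewrite big_split sum1_size size_iota.
Qed.

Lemma total_popcount_exp2 j : 2 * total_popcount (2 ^ j) = j * 2 ^ j.
Proof.
elim: j => [|j IH]; first by rewrite /total_popcount big_cons big_nil.
have -> : 2 ^ j.+1 = 2 ^ j + 2 ^ j by rewrite expnS mul2n addnn.
rewrite total_popcount_exp2D //.
by move: IH; set P := 2 ^ j; set X := total_popcount P => IH; nia.
Qed.

Lemma total_popcount_le k m : m <= 2 ^ k -> 2 * total_popcount m <= k * m.
Proof.
elim: k m => [|k IH] m le_m.
  by case: m le_m => [|[|]] //; rewrite /total_popcount ?big_nil ?big_cons ?big_nil.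
have [le_mk|lt_km] := leqP m (2 ^ k); first by have := IH m le_mk; lia.
have le_r : m - 2 ^ k <= 2 ^ k by move: le_m; rewrite expnS; lia.
rewrite -(subnKC (ltnW lt_km)) total_popcount_exp2D //.
have := IH _ le_r; have := total_popcount_exp2 k.
by move: le_r; set r := m - 2 ^ k; set P := 2 ^ k => le_r exp2 IHr; nia.
Qed.

Lemma excess_le (R : realFieldType) (x s k : R) :
  (0 <= s)%R -> (s <= k)%R -> (k < x)%R ->
  (1 / (x - s) - 1 / x <= s / (x * (x - k)))%R.
Proof.
move=> s_ge0 le_sk lt_kx.
have x_gt0 : (0 < x)%R by lra.
have xs_gt0 : (0 < x - s)%R by lra.
have xk_gt0 : (0 < x - k)%R by lra.
have -> : (1 / (x - s) - 1 / x = s / (x * (x - s)))%R.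
  by field; rewrite !lt0r_neq0.
rewrite ler_wpM2l // lef_pV2 ?posrE ?mulr_gt0 //.
by apply: ler_wpM2l; lra.
Qed.

Lemma sum_excess_lt (R : realFieldType) (d k m : nat) :
  k < d -> (forall n, n < m -> popcount n <= k) ->
  18 * total_popcount m < d * (d - k) ->
  (\sum_(n <- iota 0 m) (1 / ((d%:R : R) - (popcount n)%:R) - 1 / d%:R) < 1 / 18)%R.
Proof.
move=> lt_kd le_k lt_total; set D := d * (d - k).
have D_gt0 : 0 < D by rewrite muln_gt0; lia.
have le_total : (\sum_(n <- iota 0 m) (1 / ((d%:R : R) - (popcount n)%:R) - 1 / d%:R)
                 <= (total_popcount m)%:R / D%:R)%R.
  rewrite /total_popcount natr_sum mulr_suml !big_seq; apply: ler_sum => n.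
  rewrite mem_iota => /andP[_ lt_nm]; rewrite natrM natrB ?(ltnW lt_kd) //.
  by apply: excess_le; rewrite ?ler0n ?ler_nat ?ltr_nat ?le_k.
apply: le_lt_trans le_total _; rewrite ltr_pdivrMr ?ltr0n //.
move: lt_total; rewrite -(ltr_nat R) natrM.
by move: ((total_popcount m)%:R)%R (D%:R)%R => t u; lra.
Qed.

(* [popcount n] scans [n] bit positions and so evaluates [2 ^ n] in unary;
   seven positions suffice below [2 ^ 7]. *)
Definition total_popcount7 (m : nat) : nat := sumn (map (popcount_upto 7) (iota 0 m)).

Lemma total_popcount7E m : m <= 2 ^ 7 -> total_popcount m = total_popcount7 m.
Proof.
move=> le_m; rewrite /total_popcount /total_popcount7 sumnE big_map.
apply: eq_big_seq => n; rewrite mem_iota => /andP[_ lt_n]; apply: popcountE.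
exact: leq_trans lt_n le_m.
Qed.

Lemma total_popcount_mid_range :
  all (fun d => 18 * total_popcount7 d.-1 < d * (d - up_log 2 d.-1)) (iota 54 76).
Proof. by vm_compute. Qed.

Lemma ltn_mul10_exp2 e : 7 <= e -> 10 * e.+1 < 2 ^ e.
Proof.
move=> le7e; rewrite -(subnKC le7e); elim: (e - 7) => // j IH.
by rewrite addnS expnS; lia.
Qed.

Lemma sum_excess_small d : 50 <= d <= 53 ->
  (\sum_(n <- iota 0 d.-1) (1 / ((d%:R : rat) - (popcount n)%:R) - 1 / d%:R) < 1 / 18)%R.
Proof.
move=> /andP[le50d led53].
rewrite (eq_big_seq (fun n => (1 / ((d - popcount_upto 6 n)%:R : rat) - 1 / d%:R)%R)); last first.
  move=> n; rewrite mem_iota => /andP[_ lt_n].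
  rewrite (@popcountE 6) ?natrB //; last by apply: leq_trans lt_n _; lia.
  by apply: leq_trans (popcount_upto_le _ _) _; lia.
rewrite -(big_map (fun n => d - popcount_upto 6 n) xpredT (fun c => 1 / (c%:R : rat) - 1 / d%:R)%R).
have [->|[->|[->|->]]] : d = 50 \/ d = 51 \/ d = 52 \/ d = 53 by lia.
all: set s := map _ _; vm_compute in (value of s); rewrite {}/s !big_cons big_nil; lra.
Qed.

Lemma up_log_ltn d : 1 < d -> up_log 2 d.-1 < d.
Proof.
move=> lt1d; have : up_log 2 d.-1 <= d.-1 by apply: up_log_min => //; exact/ltnW/ltn_expl.
lia.
Qed.

Lemma total_popcount_bound d : 53 < d ->
  18 * total_popcount d.-1 < d * (d - up_log 2 d.-1).
Proof.
move=> lt53d; set k := up_log 2 d.-1.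
have [le_d129|lt129d] := leqP d 129.
  rewrite total_popcount7E; last by lia.
  by apply: (allP total_popcount_mid_range); rewrite mem_iota; lia.
have le_dk : d.-1 <= 2 ^ k := up_logP _ (isT : 1 < 2).
have lt_exp2k : 2 ^ k.-1 < d.-1 by apply: up_log_gtn; lia.
have lt7k : 7 < k by rewrite -(@ltn_exp2l 2) //; lia.
have le7k : 7 <= k.-1 by lia.
have := total_popcount_le le_dk; have := ltn_mul10_exp2 le7k.
rewrite prednK //; last lia.
by move: lt_exp2k; set P := 2 ^ k.-1; set T := total_popcount d.-1; nia.
Qed.

Theorem mainTheorem20 (d : nat) (F : seq {fset nat}) :
  50 <= d -> is_R d.-1 F ->
  (\sum_(H <- F) (1 / ((d%:R : rat) - (#|` H|)%:R) - 1 / d%:R) < 1 / 18)%R.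
Proof.
move=> le50d RF.
rewrite (big_is_R_card _ (fun c => 1 / ((d%:R : rat) - c%:R) - 1 / d%:R)%R RF).
have [le_d53|lt53d] := leqP d 53; first by apply: sum_excess_small; rewrite le50d.
apply: (sum_excess_lt _ _ _ (total_popcount_bound lt53d)).
  by apply: up_log_ltn; lia.
by move=> n lt_n; apply/popcount_le/(leq_trans lt_n); apply: up_logP.
Qed.
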